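(* Let $f(z)=e^{-z+\lambda}+\xi$ with $\lambda,\xi\in\mathbb{C}$, $\operatorname{Re}\lambda<0$, $\operatorname{Re}\xi\ge1$, and let $g(z)=e^{z+\mu}+\zeta$ with $\mu,\zeta\in\mathbb{C}$, $\operatorname{Re}\mu<0$, $\operatorname{Re}\zeta\le-1$. Then $I(f)\cap I(g)=\emptyset$.
   Context: For an entire function $f$, $f^n$ denotes the $n$-th iterate and $I(f)=\{z\in\mathbb{C}: f^n(z)\to\infty\}$ is its escaping set. *)

From Stdlib Require Import Reals.
Open Scope R_scope.

Definition Cplx : Type := (R * R)%type.
Definition Re (z : Cplx) : R := fst z.
Definition Im (z : Cplx) : R := snd z.
Definition Cadd (z w : Cplx) : Cplx := (fst z + fst w, snd z + snd w).
Definition Copp (z : Cplx) : Cplx := (- fst z, - snd z).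
Definition Cexp (z : Cplx) : Cplx := (exp (fst z) * cos (snd z), exp (fst z) * sin (snd z)).
Definition Cnorm (z : Cplx) : R := sqrt (fst z * fst z + snd z * snd z).

Definition iterate (f : Cplx -> Cplx) (n : nat) (z : Cplx) : Cplx := Nat.iter n f z.

Definition escaping (f : Cplx -> Cplx) (z : Cplx) : Prop :=
  cv_infty (fun n => Cnorm (iterate f n z)).

(* On the closed right half-plane the exponent of f has negative real part, so
   f maps it into the unit box (in the sup norm) around xi, which again lies in
   the right half-plane because Re xi >= 1; symmetrically g maps the closed left
   half-plane into the unit box around zeta.  Every point lies in one of the two
   half-planes, and there the corresponding orbit stays bounded. *)

From Stdlib Require Import Reals Lra Psatz.
Open Scope R_scope.

Lemma not_cv_infty_bounded (u : nat -> R) (M : R) :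
  (forall n, u (S n) <= M) -> ~ cv_infty u.
Proof.
  intros Hbound Hinf.
  destruct (Hinf M) as [N HN].
  specialize (HN (S N) ltac:(lia)).
  specialize (Hbound N).
  lra.
Qed.

Lemma not_escaping_invariant_bounded (f : Cplx -> Cplx) (S : Cplx -> Prop) (M : R) :
  (forall w, S w -> S (f w)) -> (forall w, S w -> Cnorm (f w) <= M) ->
  forall z, S z -> ~ escaping f z.
Proof.
  intros Hinv Hbound z Hz.
  assert (Horbit : forall n, S (iterate f n z)).
  { induction n as [|n IH]; [exact Hz | exact (Hinv _ IH)]. }
  apply (not_cv_infty_bounded _ M).
  intro n; exact (Hbound _ (Horbit n)).
Qed.

Lemma Cexp_components_lt1 (w : Cplx) :
  fst w < 0 -> Rabs (fst (Cexp w)) < 1 /\ Rabs (snd (Cexp w)) < 1.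
Proof.
  intro Hw. unfold Cexp; simpl.
  assert (Hexp : exp (fst w) < 1) by (rewrite <- exp_0; apply exp_increasing; lra).
  pose proof (exp_pos (fst w)) as Hpos.
  pose proof (COS_bound (snd w)); pose proof (SIN_bound (snd w)).
  split; apply Rabs_def1; nra.
Qed.

Lemma Cnorm_Cadd_le (c e : Cplx) :
  Rabs (fst e) <= 1 -> Rabs (snd e) <= 1 ->
  Cnorm (Cadd e c) <= sqrt ((Rabs (fst c) + 1) ^ 2 + (Rabs (snd c) + 1) ^ 2).
Proof.
  intros He1 He2. unfold Cnorm, Cadd; simpl.
  apply sqrt_le_1_alt.
  assert (Hsq : forall x a, Rabs x <= a -> x * x <= a ^ 2).
  { intros x a Hxa. pose proof (Rabs_pos x).
    change (x * x) with (Rsqr x); rewrite Rsqr_abs; unfold Rsqr; nra. }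
  apply Rplus_le_compat; apply Hsq;
    (eapply Rle_trans; [apply Rabs_triang | lra]).
Qed.

Lemma not_escaping_exp_translate (h : Cplx -> Cplx) (c : Cplx) (S : Cplx -> Prop) :
  (forall w, S w -> fst (h w) < 0) ->
  (forall e, Rabs (fst e) < 1 -> Rabs (snd e) < 1 -> S (Cadd e c)) ->
  forall z, S z -> ~ escaping (fun w => Cadd (Cexp (h w)) c) z.
Proof.
  intros Hneg Hbox.
  apply not_escaping_invariant_bounded
    with (M := sqrt ((Rabs (fst c) + 1) ^ 2 + (Rabs (snd c) + 1) ^ 2));
    intros w Hw; destruct (Cexp_components_lt1 (h w) (Hneg w Hw)).
  - now apply Hbox.
  - apply Cnorm_Cadd_le; lra.
Qed.

Theorem corollary1 (lambda xi mu zeta : Cplx) :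
  Re lambda < 0 -> 1 <= Re xi -> Re mu < 0 -> Re zeta <= -1 ->
  forall z : Cplx,
    ~ (escaping (fun w => Cadd (Cexp (Cadd (Copp w) lambda)) xi) z /\
       escaping (fun w => Cadd (Cexp (Cadd w mu)) zeta) z).
Proof.
  unfold Re; intros Hlambda Hxi Hmu Hzeta z [Hf Hg].
  destruct (Rle_or_lt 0 (fst z)) as [Hright | Hleft].
  - revert Hf; apply not_escaping_exp_translate with (S := fun w => 0 <= fst w).
    + intros w Hw; simpl; lra.
    + intros e He _; simpl; destruct (Rabs_def2 _ _ He); lra.
    + exact Hright.
  - revert Hg; apply not_escaping_exp_translate with (S := fun w => fst w <= 0).
    + intros w Hw; simpl; lra.
    + intros e He _; simpl; destruct (Rabs_def2 _ _ He); lra.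
    + lra.
Qed.
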